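(* Let $\mathcal X\subseteq[0,1]$ be a Borel set with $0,1\in\mathcal X$, fix $\mu\in(0,1)$ and let $I_\mu=[(\mu-1)^{-1},\mu^{-1}]$. Let $E=(E_t)_{t\ge0}$ be an e-process for $\bar{\mathcal H}^\infty_\mu$. For $x\in\mathcal X$ let $E^x=(E^x_t)_{t\ge0}$ be the sequence of Borel functions $E^x_t:\mathcal X^t\to[0,+\infty)$ given by $E^x_t(y^t)=E_{t+1}(x,y^t)$ for $t\ge1$ and $E^x_0=E_1(x)$. Then there is $\lambda_1\in I_\mu$ such that for any $\tau\in\mathcal T$, any $Q\in\bar{\mathcal H}^\infty_\mu$ and any $x\in\mathcal X$, $$\mathbb E_Q[E^x_\tau]\le 1+\lambda_1(x-\mu).$$
   Context: $\mathcal X^\infty$ is the space of sequences in $\mathcal X$ with the product sigma-field generated by cylinder sets; $\mathcal F_t$ is generated by the first $t$ coordinates. $\mathcal T$ is the set of finite stopping times: measurable $\tau:\mathcal X^\infty\to\{0,1,2,\dots\}$ with $\{\tau=t\}\in\mathcal F_t$ for all $t\ge0$; for a sequence $g=(g_s)_{s\ge0}$, $g_\tau(y^\infty)=g_{\tau(y^\infty)}(y^{\tau(y^\infty)})$. $\bar{\mathcal H}^\infty_\mu$ is the set of probability measures $Q$ on $\mathcal X^\infty$ such that, for $X^\infty\sim Q$, the law of $X_1$ has mean $\mu$ and support of at most two points, and for every $t\ge2$ the conditional law of $X_t$ given $X^{t-1}$ has mean $\mu$ and is supported on at most two points, $Q$-almost surely. An e-process for $\bar{\mathcal H}^\infty_\mu$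 is a sequence $E=(E_t)_{t\ge0}$ of non-negative Borel functions $E_t:\mathcal X^t\to[0,+\infty)$ ($E_0$ a constant) with $\mathbb E_Q[E_\tau]\le1$ for all $Q\in\bar{\mathcal H}^\infty_\mu$ and all $\tau\in\mathcal T$. *)

From HB Require Import structures.
From mathcomp Require Import all_boot all_order all_algebra.
From mathcomp Require Import all_classical all_reals all_analysis.
Set Implicit Arguments. Unset Strict Implicit. Unset Printing Implicit Defensive.
Import Order.TTheory GRing.Theory Num.Theory.
Import numFieldNormedType.Exports.
Local Open Scope classical_set_scope.
Local Open Scope ring_scope.

Section defs.
Variable R : realType.

(* Sequences y = (y_0, y_1, ...) ; coordinate i (0-based) is the paper's X_{i+1}. *)
Definition cyl_sets : set (set (nat -> R)) :=
  [set A | exists i (B : set R), measurable B /\ A = (fun w => w i) @^-1` B].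

Definition Seq := g_sigma_algebraType cyl_sets.

Definition Ft (t : nat) : set (set (nat -> R)) :=
  <<s [set A | exists i (B : set R),
         (i < t)%N /\ measurable B /\ A = (fun w => w i) @^-1` B] >>.

Definition Xinf (X : set R) : set (nat -> R) := [set w | forall n, X (w n)].

Definition Ft_measurable (X : set R) (t : nat) (f : (nat -> R) -> R) : Prop :=
  forall B : set R, measurable B ->
    exists A, Ft t A /\ f @^-1` B `&` Xinf X = A `&` Xinf X.

Definition is_stopping_time (X : set R) (tau : (nat -> R) -> nat) : Prop :=
  forall t, exists A, Ft t A /\ tau @^-1` [set t] `&` Xinf X = A `&` Xinf X.

Definition two_point_mean (mu : R) (m : probability R R) : Prop :=
  (exists a b : R, m [set a; b] = 1%E) /\ (\int[m]_x (x%:E) = mu%:E)%E.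

(* the conditional law of coordinate n given the first n coordinates (a regular
   conditional distribution: an F_n-measurable kernel kappa) has, Q-a.s.,
   mean mu and support of at most two points.  For n = 0 (F_0 trivial) this
   is a statement about the law of the first coordinate. *)
Definition cond_two_point (mu : R) (Q : probability Seq R) (n : nat) : Prop :=
  exists kappa : (nat -> R) -> probability R R,
    (forall B : set R, measurable B ->
       forall C : set R, measurable C ->
         Ft n ((fun w => fine (kappa w B)) @^-1` C)) /\
    (forall (A : set (nat -> R)) (B : set R), Ft n A -> measurable B ->
       Q (A `&` (fun w => w n) @^-1` B) = (\int[Q]_(w in A) kappa w B)%E) /\
    {ae Q, forall w, two_point_mean mu (kappa w)}.

(* bar H^infty_mu : laws on X^infty (i.e. concentrated on X^infty) with
   two-point mean-mu conditional laws *)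
Definition barH (X : set R) (mu : R) (Q : probability Seq R) : Prop :=
  Q (Xinf X) = 1%E /\ forall n, cond_two_point mu Q n.

Definition eprocess (X : set R) (mu : R) (E : nat -> (nat -> R) -> R) : Prop :=
  (forall t, Ft_measurable X t (E t)) /\
  (forall t w, Xinf X w -> 0 <= E t w) /\
  (forall (Q : probability Seq R) (tau : (nat -> R) -> nat),
     barH X mu Q -> is_stopping_time X tau ->
     (\int[Q]_(w in Xinf X) (E (tau w) w)%:E <= 1)%E).

Definition scons (x : R) (w : nat -> R) : nat -> R :=
  fun n => if n is k.+1 then w k else x.

End defs.

(* Write f(x) for the values E_Q[E^x_tau].  Given a <> b in X and p in [0, 1]
   with p a + (1 - p) b = mu, two laws Q_a, Q_b in H_mu and stopping times
   tau_a, tau_b glue into a single test: X_1 is a with probability p and b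
   otherwise, the remaining coordinates follow Q_a resp. Q_b, and one stops at
   1 + tau_a resp. 1 + tau_b.  The glued law is again in H_mu (its first
   conditional law is the two-point law p delta_a + (1 - p) delta_b with mean mu),
   so the e-process property gives p f(a) + (1 - p) f(b) <= 1.  Hence every f(x)
   is finite, and each slope (f(b) - 1) / (b - mu), b > mu, lies below each slope
   (1 - f(a)) / (mu - a), a < mu; the supremum of the former is the required
   lambda_1, and comparing with the points 0 and 1, where f >= 0, places it in
   I_mu. *)

From HB Require Import structures.
From mathcomp Require Import all_boot all_order all_algebra.
From mathcomp Require Import all_classical all_reals all_analysis.
From mathcomp Require Import measurable_realfun.
From mathcomp Require Import ring lra.
Import Order.TTheory GRing.Theory Num.Theory.
Import numFieldNormedType.Exports.
Local Open Scope classical_set_scope.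
Local Open Scope ring_scope.
Set Implicit Arguments. Unset Strict Implicit. Unset Printing Implicit Defensive.

Section affine_majorant.
Variables (R : realType) (X : set R) (mu : R) (W : R -> R -> Prop).
Hypotheses (X0 : X 0) (X1 : X 1) (mu01 : 0 < mu < 1).
Hypothesis W_ge0 : forall x r, X x -> W x r -> 0 <= r.
Hypothesis W_total : forall x y r, X y -> W x r -> exists r', W y r'.
Hypothesis W_chord : forall a b ra rb, X a -> X b -> a < b -> a <= mu <= b ->
  W a ra -> W b rb -> (b - mu) * ra + (mu - a) * rb <= b - a.

Lemma chord_slope_le a b ra rb : X a -> X b -> a < mu -> mu < b -> W a ra -> W b rb ->
  (rb - 1) / (b - mu) <= (1 - ra) / (mu - a).
Proof.
move=> Xa Xb amu mub Wa Wb.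
have amub : a <= mu <= b by rewrite !ltW.
have := W_chord Xa Xb (lt_trans amu mub) amub Wa Wb.
rewrite ler_pdivrMr ?subr_gt0 // mulrAC ler_pdivlMr ?subr_gt0 //.
lra.
Qed.

(* The extra point (mu - 1)^-1 makes the set nonempty and enforces the lower
   end of the interval. *)
Let slopes : set R := [set s | exists b r, [/\ X b, mu < b, W b r & s = (r - 1) / (b - mu)]]
  `|` [set (mu - 1)^-1].

Let slopes_ub a ra : X a -> a < mu -> W a ra -> ubound slopes ((1 - ra) / (mu - a)).
Proof.
move=> Xa amu Wa _ [[b [r [Xb mub Wb ->]]]|->]; first exact: chord_slope_le.
have [mu0 mu1] := andP mu01.
have [r1 W1] := W_total X1 Wa.
apply: le_trans (chord_slope_le Xa X1 amu mu1 Wa W1).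
have -> : (mu - 1)^-1 = (0 - 1) / (1 - mu).
  by rewrite sub0r mulNr div1r -invrN opprB.
by rewrite ler_pM2r ?invr_gt0 ?subr_gt0 // lerD2r (W_ge0 X1 W1).
Qed.

Let slopes_le_inv_mu : ubound slopes mu^-1.
Proof.
have [mu0 mu1] := andP mu01.
move=> _ [[b [r [Xb mub Wb ->]]]|->].
  have [r0 W0] := W_total X0 Wb.
  apply: le_trans (chord_slope_le X0 Xb mu0 mub W0 Wb) _.
  rewrite subr0 ler_piMl ?invr_ge0 ?(ltW mu0) //.
  by rewrite gerBl (W_ge0 X0 W0).
by rewrite (@le_trans _ _ 0) // ?invr_ge0 ?invr_le0 ?subr_le0 ltW.
Qed.

Lemma exists_affine_majorant : exists2 lam, (mu - 1)^-1 <= lam <= mu^-1 &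
  forall x r, X x -> W x r -> r <= 1 + lam * (x - mu).
Proof.
have [mu0 mu1] := andP mu01.
have slopes_inf : slopes (mu - 1)^-1 by right.
have slopes_sup : has_sup slopes by split; [exists (mu - 1)^-1 | exists mu^-1].
exists (sup slopes).
  by rewrite (sup_upper_bound slopes_sup) // ge_sup //; exists (mu - 1)^-1.
move=> x r Xx Wx; have [xmu|mux|xmu] := ltgtP x mu.
- have : sup slopes <= (1 - r) / (mu - x).
    by apply: ge_sup; [exists (mu - 1)^-1 | exact: slopes_ub].
  rewrite ler_pdivlMr ?subr_gt0 //; lra.
- have : (r - 1) / (x - mu) <= sup slopes.
    by apply: (sup_upper_bound slopes_sup); left; exists x, r.
  rewrite ler_pdivrMr ?subr_gt0 //; lra.
- rewrite {}xmu in Xx Wx *; have [r1 W1] := W_total X1 Wx.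
  have mumu1 : mu <= mu <= 1 by rewrite lexx ltW.
  by have := W_chord Xx X1 mu1 mumu1 Wx W1; nra.
Qed.

End affine_majorant.

Section affine_majorant_ereal.
Variables (R : realType) (X : set R) (mu : R) (V : R -> \bar R -> Prop).
Hypotheses (X0 : X 0) (X1 : X 1) (mu01 : 0 < mu < 1).
Hypothesis V_ge0 : forall x v, X x -> V x v -> (0 <= v)%E.
Hypothesis V_total : forall x y v, V x v -> exists v', V y v'.
Hypothesis V_mix : forall a b p va vb, X a -> X b -> a != b -> 0 <= p <= 1 ->
  p * a + (1 - p) * b = mu -> V a va -> V b vb ->
  (p%:E * va + (1 - p)%:E * vb <= 1)%E.

Lemma chord_le_of_mix a b va vb : X a -> X b -> a < b -> a <= mu <= b ->
  V a va -> V b vb -> ((b - mu)%:E * va + (mu - a)%:E * vb <= (b - a)%:E)%E.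
Proof.
move=> Xa Xb ab /andP[amu mub] Va Vb.
have ba0 : 0 < b - a by rewrite subr_gt0.
pose p := (b - mu) / (b - a).
have p0 : 0 <= p by rewrite divr_ge0 ?subr_ge0 ?(ltW ab).
have p1 : p <= 1 by rewrite ler_pdivrMr // mul1r lerD2l lerN2.
have pmu : p * a + (1 - p) * b = mu by rewrite /p; field; rewrite gt_eqF.
have -> : ((b - mu)%:E * va + (mu - a)%:E * vb =
          (b - a)%:E * (p%:E * va + (1 - p)%:E * vb))%E.
  rewrite ge0_muleDr ?mule_ge0 ?lee_fin ?subr_ge0 ?(V_ge0 Xa Va) ?(V_ge0 Xb Vb) //.
  by rewrite !muleA -!EFinM; congr (_%:E * _ + _%:E * _)%E; rewrite /p; field;
    rewrite gt_eqF.
rewrite -[leRHS]mule1 lee_wpmul2l ?lee_fin ?(ltW ba0) //.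
by apply: V_mix Xa Xb _ _ pmu Va Vb; rewrite ?lt_eqF ?p0.
Qed.

Let fin_num_of_scaled_le (c d : R) (v : \bar R) :
  0 < c -> (0 <= v)%E -> (c%:E * v <= d%:E)%E -> v \is a fin_num.
Proof. by move=> c0; case: v => [r| |] //= _; rewrite gt0_muley ?lte_fin. Qed.

Lemma fin_num_of_mix x v : X x -> V x v -> v \is a fin_num.
Proof.
move=> Xx Vx; have [mu0 mu1] := andP mu01; have v0 := V_ge0 Xx Vx.
have [xmu|mux] := lerP x mu.
- have [v1 V1] := V_total 1 Vx.
  have xmu1 : x <= mu <= 1 by rewrite xmu ltW.
  apply: (@fin_num_of_scaled_le (1 - mu) (1 - x)) v0 _; first by rewrite subr_gt0.
  apply: le_trans (chord_le_of_mix Xx X1 (le_lt_trans xmu mu1) xmu1 Vx V1).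
  by rewrite leeDl // mule_ge0 ?lee_fin ?subr_ge0 ?(V_ge0 X1 V1).
- have [v0' V0] := V_total 0 Vx.
  have xmu0 : 0 <= mu <= x by rewrite !ltW.
  apply: (@fin_num_of_scaled_le mu x) v0 _ => //.
  have := chord_le_of_mix X0 Xx (lt_trans mu0 mux) xmu0 V0 Vx; rewrite !subr0.
  apply: le_trans.
  by rewrite leeDr // mule_ge0 ?lee_fin ?subr_ge0 ?(V_ge0 X0 V0) ?(ltW mux).
Qed.

Lemma exists_affine_majorant_ereal : exists2 lam, (mu - 1)^-1 <= lam <= mu^-1 &
  forall x v, X x -> V x v -> (v <= (1 + lam * (x - mu))%:E)%E.
Proof.
pose W x r := V x r%:E.
have W_ge0 x r : X x -> W x r -> 0 <= r by move=> Xx /(V_ge0 Xx); rewrite lee_fin.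
have W_total x y r : X y -> W x r -> exists r', W y r'.
  move=> Xy /(V_total y) [v Vy].
  by exists (fine v); rewrite /W fineK //; exact: fin_num_of_mix Vy.
have W_chord a b ra rb : X a -> X b -> a < b -> a <= mu <= b -> W a ra -> W b rb ->
    (b - mu) * ra + (mu - a) * rb <= b - a.
  move=> Xa Xb ab amub Wa Wb.
  by have := chord_le_of_mix Xa Xb ab amub Wa Wb; rewrite -!EFinM -EFinD lee_fin.
have [lam lam_range maj] := exists_affine_majorant X0 X1 mu01 W_ge0 W_total W_chord.
exists lam => // x v Xx Vx; rewrite -(fineK (fin_num_of_mix Xx Vx)) lee_fin.
by apply: maj; rewrite /W ?fineK //; exact: fin_num_of_mix Vx.
Qed.
End affine_majorant_ereal.

Section sequence_space.
Variable R : realType.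
Implicit Types (X : set R) (w : nat -> R).

Definition shift w : nat -> R := fun n => w n.+1.

Definition Ft_cyl (t : nat) : set (set (nat -> R)) := [set A | exists i (B : set R),
  (i < t)%N /\ measurable B /\ A = (fun w => w i) @^-1` B].

(* Ft t is the sigma-algebra of the measurable type generated by Ft_cyl t, so the
   generic lemmas on measurable sets and functions apply to it. *)
Lemma FtE t : @Ft R t = (Ft_cyl t).-sigma.-measurable.
Proof. by []. Qed.

Local Notation FtType t := (g_sigma_algebraType (Ft_cyl t)).

Lemma Ft_coord0 t a : (0 < t)%N -> Ft t [set w : nat -> R | w 0%N = a].
Proof. by move=> t0; apply: sub_sigma_algebra; exists 0%N, [set a]. Qed.

Lemma measurable_Ft t (A : set (Seq R)) : Ft t A -> measurable A.
Proof.
apply: smallest_sub; first exact: smallest_sigma_algebra.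
by move=> _ [i [B [_ [mB ->]]]]; apply: sub_sigma_algebra; exists i, B.
Qed.

Lemma Ft0_trivial (A : set (Seq R)) : Ft 0 A -> A = set0 \/ A = setT.
Proof.
apply: (@smallest_sub _ _ _ [set A | A = set0 \/ A = setT]).
- split.
  + by left.
  + by move=> B [->|->]; [right; exact: setD0 | left; exact: setDv].
  + move=> F F01; have [[n Fn]|nF] := pselect (exists n, F n = setT).
      by right; apply/seteqP; split => // w _; exists n; rewrite ?Fn.
    left; apply/seteqP; split => // w [n _]; case: (F01 n) => [->//|Fn].
    by exfalso; apply: nF; exists n.
- by move=> ? [i [B []]]; rewrite ltn0.
Qed.

Lemma Ft_shift t (A : set (nat -> R)) : Ft t A -> Ft t.+1 (shift @^-1` A).
Proof.
have : measurable_fun [set: FtType t.+1] (shift : _ -> FtType t).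
  apply: (@measurability _ _ (FtType t.+1) (FtType t) setT _ (Ft_cyl t)) => //.
  move=> _ [_ [i [B [it [mB ->]]]] <-]; rewrite setTI.
  by apply: sub_sigma_algebra; exists i.+1, B.
by move=> mshift FA; have := mshift measurableT A FA; rewrite setTI.
Qed.

Lemma measurable_shift : measurable_fun [set: Seq R] (shift : Seq R -> Seq R).
Proof.
apply: (@measurability _ _ (Seq R) (Seq R) setT _ (@cyl_sets R)) => //.
move=> _ [_ [i [B [mB ->]]] <-]; rewrite setTI.
by apply: sub_sigma_algebra; exists i.+1, B.
Qed.

Lemma preimage_scons_coord x i (B : set R) :
  scons x @^-1` ((fun w => w i) @^-1` B) =
  if i is k.+1 then (fun w => w k) @^-1` B else if x \in B then setT else set0.
Proof. by case: i => [|k] //; exact: preimage_cst. Qed.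

Lemma measurable_scons x : measurable_fun [set: Seq R] (scons x : Seq R -> Seq R).
Proof.
apply: (@measurability _ _ (Seq R) (Seq R) setT _ (@cyl_sets R)) => //.
move=> _ [_ [i [B [mB ->]]] <-]; rewrite setTI preimage_scons_coord.
case: i => [|i]; first by case: ifP.
by apply: sub_sigma_algebra; exists i, B.
Qed.

Definition scons_mfun x : {mfun Seq R >-> Seq R} :=
  HB.pack (scons x : Seq R -> Seq R)
    (isMeasurableFun.Build _ _ (Seq R) (Seq R) (scons x) (measurable_scons x)).

Lemma Ft_scons x t (A : set (nat -> R)) : Ft t.+1 A -> Ft t (scons x @^-1` A).
Proof.
have : measurable_fun [set: FtType t] (scons x : _ -> FtType t.+1).
  apply: (@measurability _ _ (FtType t) (FtType t.+1) setT _ (Ft_cyl t.+1)) => //.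
  move=> _ [_ [i [B [it [mB ->]]]] <-]; rewrite setTI preimage_scons_coord.
  case: i it => [|i] it; first by case: ifP.
  by apply: sub_sigma_algebra; exists i, B.
by move=> mscons FA; have := mscons measurableT A FA; rewrite setTI.
Qed.

Lemma measurable_Xinf X : measurable X -> measurable (Xinf X : set (Seq R)).
Proof.
move=> mX; rewrite (_ : Xinf X = \bigcap_n ((fun w : nat -> R => w n) @^-1` X)).
  by apply: bigcapT_measurable => n; apply: sub_sigma_algebra; exists n, X.
by apply/seteqP; split => w Xw n; [move=> _; exact: Xw | exact: Xw].
Qed.

Lemma Xinf_shift X w : Xinf X w -> Xinf X (shift w).
Proof. by move=> Xw n; exact: Xw. Qed.

Lemma preimage_scons_Xinf X x : X x -> scons x @^-1` Xinf X = Xinf X.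
Proof.
by move=> Xx; apply/seteqP; split => w Xw; [move=> n; exact: (Xw n.+1) | case].
Qed.

Lemma measurable_fun_kernel n (k : (nat -> R) -> probability R R) (B : set R)
    (D : set (Seq R)) : measurable B ->
  (forall C, measurable C -> Ft n ((fun w => fine (k w B)) @^-1` C)) ->
  measurable_fun D (fun w => k w B).
Proof.
move=> mB Fk; rewrite (_ : (fun w => k w B) = EFin \o (fun w => fine (k w B))).
  apply/measurable_EFinP => mD C mC; apply: measurableI => //.
  exact: measurable_Ft (Fk C mC).
by apply/funext => w /=; rewrite fineK // fin_num_measure.
Qed.

End sequence_space.
Arguments shift {R}.

Section convex_combination.
Context d (T : measurableType d) (R : realType).
Variables (p : {i01 R}) (P1 P2 : probability T R).

Definition pconv (A : set T) : \bar R :=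
  ((p%:num)%:E * P1 A + (1 - p%:num)%:E * P2 A)%E.

Let pconv_measure_add :
  pconv = measure_add (mscale p%:num%:nng P1) (mscale (1 - p%:num)%:nng P2).
Proof. by apply/funext => A; rewrite measure_addE. Qed.

Let pconv0 : pconv set0 = 0%E.
Proof. by rewrite /pconv !measure0 !mule0 adde0. Qed.

Let pconv_ge0 A : (0 <= pconv A)%E.
Proof. by rewrite pconv_measure_add. Qed.

Let pconv_sigma_additive : semi_sigma_additive pconv.
Proof. by rewrite pconv_measure_add; exact: measure_semi_sigma_additive. Qed.

HB.instance Definition _ :=
  isMeasure.Build _ _ _ pconv pconv0 pconv_ge0 pconv_sigma_additive.

Let pconv_setT : pconv setT = 1%E.
Proof. by rewrite /pconv !probability_setT !mule1 -EFinD addrC subrK. Qed.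

HB.instance Definition _ := Measure_isProbability.Build _ _ _ pconv pconv_setT.

Lemma pconvE A : pconv A = ((p%:num)%:E * P1 A + (1 - p%:num)%:E * P2 A)%E.
Proof. by []. Qed.

Lemma ge0_integral_pconv (D : set T) (f : T -> \bar R) : measurable D ->
  measurable_fun D f -> (forall x, D x -> 0 <= f x)%E ->
  (\int[pconv]_(x in D) f x = (p%:num)%:E * \int[P1]_(x in D) f x
     + (1 - p%:num)%:E * \int[P2]_(x in D) f x)%E.
Proof.
move=> mD mf f0; rewrite pconv_measure_add ge0_integral_measure_add //.
by rewrite !ge0_integral_mscale.
Qed.

Lemma integral_pconv (D : set T) (f : T -> \bar R) : measurable D ->
  P1.-integrable D f -> P2.-integrable D f ->
  (\int[pconv]_(x in D) f x = (p%:num)%:E * \int[P1]_(x in D) f x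
     + (1 - p%:num)%:E * \int[P2]_(x in D) f x)%E.
Proof.
move=> mD if1 if2; have mf := measurable_int _ if1.
rewrite [LHS]integralE !ge0_integral_pconv //; last 2 first.
- exact: measurable_funeneg.
- exact: measurable_funepos.
rewrite (integralE P1 D f) (integralE P2 D f).
rewrite -(fineK (integrable_pos_fin_num mD if1)) -(fineK (integrable_neg_fin_num mD if1)).
rewrite -(fineK (integrable_pos_fin_num mD if2)) -(fineK (integrable_neg_fin_num mD if2)).
by rewrite -!EFinM -!EFinD; congr EFin; ring.
Qed.

End convex_combination.

Lemma integrable_dirac d (T : measurableType d) (R : realType) (a : T)
    (f : T -> \bar R) : measurable_fun setT f -> f a \is a fin_num -> (\d_a).-integrable setT f.
Proof.
move=> mf fa; apply/integrableP; split => //.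
rewrite integral_dirac //; last exact: measurableT_comp.
by rewrite diracT mul1e -fin_num_abs.
Qed.

Lemma setI_eq_sub (T : Type) (A A' Y : set T) :
  A `&` Y = A' `&` Y -> A `&` Y `<=` A'.
Proof. by move=> AA' w; rewrite AA' => -[]. Qed.

Section gluing.
Variable R : realType.
Implicit Types (X : set R) (w : nat -> R) (A B : set (nat -> R)).

Definition glue (a : R) A B : set (nat -> R) :=
  [set w | if w 0%N == a then A (shift w) else B (shift w)].

Lemma glueE a A B : glue a A B =
  ([set w | w 0%N = a] `&` shift @^-1` A) `|` (~` [set w | w 0%N = a] `&` shift @^-1` B).
Proof.
apply/seteqP; split => w; rewrite /glue /=; first by case: eqP; [left | right].
by case=> -[/= w0 h]; case: eqP.
Qed.

Lemma Ft_glue t a A B : Ft t A -> Ft t B -> Ft t.+1 (glue a A B).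
Proof.
move=> FA FB; have F0 := Ft_coord0 a (ltn0Sn t).
rewrite glueE FtE; apply: measurableU; apply: measurableI.
- exact: F0.
- exact: Ft_shift.
- exact: measurableC.
- exact: Ft_shift.
Qed.

Lemma measurable_glue a (A B : set (Seq R)) :
  measurable A -> measurable B -> measurable (glue a A B : set (Seq R)).
Proof.
have m0 : measurable ([set w | w 0%N = a] : set (Seq R)).
  exact: measurable_Ft (Ft_coord0 a (ltn0Sn 0)).
have mshift (C : set (Seq R)) : measurable C -> measurable (shift @^-1` C : set (Seq R)).
  by move=> mC; rewrite -[_ @^-1` _]setTI; exact: measurable_shift.
move=> mA mB; rewrite glueE; apply: measurableU; apply: measurableI.
- exact: m0.
- exact: mshift.
- exact: measurableC.
- exact: mshift.
Qed.

Lemma preimage_scons_glue x a A B : scons x @^-1` glue a A B = if x == a then A else B.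
Proof. by rewrite /glue /preimage /=; case: (x == a). Qed.

Lemma glue_trace X a A A' B B' : A `&` Xinf X = A' `&` Xinf X ->
  B `&` Xinf X = B' `&` Xinf X -> glue a A B `&` Xinf X = glue a A' B' `&` Xinf X.
Proof.
move=> AA' BB'; apply/seteqP; split => w [gw Xw]; split => //; move: gw;
  rewrite /glue /=; have Xsw := Xinf_shift Xw; case: ifP => _ gw.
- exact: setI_eq_sub AA' _ (conj gw Xsw).
- exact: setI_eq_sub BB' _ (conj gw Xsw).
- exact: setI_eq_sub (esym AA') _ (conj gw Xsw).
- exact: setI_eq_sub (esym BB') _ (conj gw Xsw).
Qed.

Definition glue_time (a : R) (ta tb : (nat -> R) -> nat) w : nat :=
  if w 0%N == a then (ta (shift w)).+1 else (tb (shift w)).+1.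

Lemma preimage_glue_time a ta tb s : glue_time a ta tb @^-1` [set s.+1] =
  glue a (ta @^-1` [set s]) (tb @^-1` [set s]).
Proof.
apply/funext => w; rewrite /preimage /glue_time /glue /=.
by case: ifP => _; apply/propext; split => [[]|->].
Qed.

Lemma stopping_time_glue_time X a ta tb : is_stopping_time X ta ->
  is_stopping_time X tb -> is_stopping_time X (glue_time a ta tb).
Proof.
move=> sta stb [|s].
  exists set0; split; first by rewrite FtE; exact: measurable0.
  by apply/seteqP; split => w [] //; rewrite /glue_time /=; case: ifP.
have [Aa [FAa eAa]] := sta s; have [Ab [FAb eAb]] := stb s.
exists (glue a Aa Ab); split; first exact: Ft_glue.
by rewrite preimage_glue_time; exact: glue_trace.
Qed.

End gluing.

Section glued_law.
Variables (R : realType) (a b : R) (p : {i01 R}) (Qa Qb : probability (Seq R) R).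

Definition glue_prob : probability (Seq R) R :=
  pconv p (distribution Qa (scons_mfun a)) (distribution Qb (scons_mfun b)).

Lemma glue_probE A : glue_prob A =
  ((p%:num)%:E * Qa (scons a @^-1` A) + (1 - p%:num)%:E * Qb (scons b @^-1` A))%E.
Proof. by []. Qed.

Lemma ge0_integral_glue_prob (D : set (Seq R)) (f : Seq R -> \bar R) :
  measurable D -> measurable_fun D f -> (forall w, D w -> 0 <= f w)%E ->
  (\int[glue_prob]_(w in D) f w =
     (p%:num)%:E * \int[Qa]_(w in scons a @^-1` D) f (scons a w)
   + (1 - p%:num)%:E * \int[Qb]_(w in scons b @^-1` D) f (scons b w))%E.
Proof.
move=> mD mf f0; rewrite ge0_integral_pconv //.
have f0' : {in D, forall w, (0 <= f w)%E} by move=> w /[!inE]; exact: f0.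
by rewrite /distribution !(ge0_integral_pushforward (measurable_scons _)).
Qed.

End glued_law.

Lemma two_point_mean_pconv (R : realType) (mu a b : R) (p : {i01 R}) :
  p%:num * a + (1 - p%:num) * b = mu -> two_point_mean mu (pconv p \d_a \d_b).
Proof.
move=> pmu; split.
  exists a, b; rewrite /= pconvE /= !diracE !mem_set /=; [|by right|by left].
  by rewrite !mule1 -EFinD addrC subrK.
have mEFin : measurable_fun [set: R] (EFin : R -> \bar R) by exact: EFin_measurable.
rewrite integral_pconv // ?integrable_dirac // !integral_dirac // !diracT !mul1e.
by rewrite -!EFinM -EFinD pmu.
Qed.

Section glued_law_barH.
Variables (R : realType) (X : set R) (mu a b : R) (p : {i01 R}).
Variables (Qa Qb : probability (Seq R) R).
Hypotheses (Xa : X a) (Xb : X b) (ab : a != b).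
Hypotheses (pmu : p%:num * a + (1 - p%:num) * b = mu).
Hypotheses (HQa : barH X mu Qa) (HQb : barH X mu Qb).
Local Notation Q := (glue_prob a b p Qa Qb).

Lemma glue_prob_Xinf : Q (Xinf X) = 1%E.
Proof.
rewrite glue_probE !preimage_scons_Xinf // HQa.1 HQb.1 !mule1 -EFinD.
by rewrite addrC subrK.
Qed.

Let prob_scons_coord0 (P : probability (Seq R) R) x (B : set R) :
  P (scons x @^-1` ((fun w => w 0%N) @^-1` B)) = \d_x B.
Proof.
rewrite preimage_scons_coord diracE.
by case: (x \in B); [exact: probability_setT | exact: measure0].
Qed.

Lemma cond_two_point_glue_prob0 : cond_two_point mu Q 0.
Proof.
exists (fun=> pconv p \d_a \d_b); split; [|split].
- move=> B mB C mC; rewrite (preimage_cst (fine _)) FtE.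
  by case: ifP => _; [exact: measurableT | exact: measurable0].
- move=> A B /Ft0_trivial[->|->] mB; first by rewrite set0I measure0 integral_set0.
  rewrite setTI integral_cst // [X in (_ * X)%E](_ : _ = 1%E); last first.
    exact: probability_setT.
  by rewrite mule1 glue_probE !prob_scons_coord0.
- exact: aeW (fun=> two_point_mean_pconv pmu).
Qed.

Lemma cond_two_point_glue_probS n : cond_two_point mu Q n.+1.
Proof.
have ba : (b == a) = false by apply/negbTE; rewrite eq_sym.
have [ka [Fka [dka aeka]]] := HQa.2 n; have [kb [Fkb [dkb aekb]]] := HQb.2 n.
pose k w := if w 0%N == a then ka (shift w) else kb (shift w).
have Fk B : measurable B ->
    forall C, measurable C -> Ft n.+1 ((fun w => fine (k w B)) @^-1` C).
  move=> mB C mC; rewrite (_ : _ @^-1` _ = glue a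
      ((fun w => fine (ka w B)) @^-1` C) ((fun w => fine (kb w B)) @^-1` C)).
    by apply: Ft_glue; [exact: Fka | exact: Fkb].
  by apply/funext => w; rewrite /k /glue /preimage /=; case: ifP.
exists k; split; [exact: Fk | split].
- move=> A B FA mB; rewrite glue_probE ge0_integral_glue_prob //; first last.
  + exact: measurable_fun_kernel (Fk _ mB).
  + exact: measurable_Ft FA.
  rewrite !preimage_setI !preimage_scons_coord dka ?dkb //; try exact: Ft_scons.
  by congr (_ * _ + _ * _)%E; apply: eq_integral => w _; rewrite /k /= ?eqxx ?ba.
- have [Na [mNa Na0 sNa]] := aeka; have [Nb [mNb Nb0 sNb]] := aekb.
  exists (glue a Na Nb); split; first exact: measurable_glue.
    by rewrite glue_probE !preimage_scons_glue eqxx ba Na0 Nb0 !mule0 adde0.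
  move=> w /= nk; rewrite /glue /=; move: nk; rewrite /k.
  by case: ifP => _ nk; [apply: sNa | apply: sNb].
Qed.

Lemma barH_glue_prob : barH X mu Q.
Proof.
split; first exact: glue_prob_Xinf.
by case=> [|n]; [exact: cond_two_point_glue_prob0 | exact: cond_two_point_glue_probS].
Qed.

End glued_law_barH.

Section stopped_process.
Variables (R : realType) (X : set R).

Lemma stopping_time_cst0 : is_stopping_time X (fun=> 0%N).
Proof.
case=> [|t]; [exists setT | exists set0]; rewrite FtE; split => //.
  by rewrite preimage_cst mem_set.
by rewrite preimage_cst memNset.
Qed.

Lemma measurable_stopped (tau : (nat -> R) -> nat) (F : nat -> (nat -> R) -> R) :
  measurable X -> is_stopping_time X tau -> (forall t, Ft_measurable X t (F t)) ->
  measurable_fun (Xinf X : set (Seq R)) (fun w => (F (tau w) w)%:E).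
Proof.
move=> mX stau mF; apply/measurable_EFinP => _ B mB.
have [A eA] := choice stau; have [C eC] := choice (fun t => mF t B mB).
rewrite (_ : _ `&` _ = \bigcup_t (A t `&` C t `&` Xinf X)).
  apply: bigcupT_measurable => t; apply: measurableI; last exact: measurable_Xinf.
  by apply: measurableI; apply: measurable_Ft; [exact: (eA t).1 | exact: (eC t).1].
apply/seteqP; split => w.
  move=> [Xw /= Bw]; exists (tau w) => //.
  have Atw := setI_eq_sub (eA (tau w)).2 (conj (erefl (tau w)) Xw).
  by have Ctw := setI_eq_sub (eC (tau w)).2 (conj Bw Xw).
move=> [t _ [[Atw Ctw] Xw]]; split => //=.
have -> : tau w = t := setI_eq_sub (esym (eA t).2) (conj Atw Xw).
by have := setI_eq_sub (esym (eC t).2) (conj Ctw Xw).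
Qed.
End stopped_process.

Section eprocess_means.
Variables (R : realType) (X : set R) (mu : R) (E : nat -> (nat -> R) -> R).
Hypotheses (hE : eprocess X mu E) (mX : measurable X).

Definition Ex_mean (x : R) (v : \bar R) : Prop :=
  exists tau (Q : probability (Seq R) R), [/\ is_stopping_time X tau, barH X mu Q &
    v = (\int[Q]_(w in Xinf X) (E (tau w).+1 (scons x w))%:E)%E].

Lemma Ex_mean_ge0 x v : X x -> Ex_mean x v -> (0 <= v)%E.
Proof.
move=> Xx [tau [Q [_ _ ->]]]; apply: integral_ge0 => w Xw.
by rewrite lee_fin; apply: hE.2.1; rewrite -(preimage_scons_Xinf Xx) in Xw.
Qed.

Lemma Ex_mean_total x y v : Ex_mean x v -> exists v', Ex_mean y v'.
Proof.
move=> [_ [Q [_ HQ _]]]; eexists; exists (fun=> 0%N), Q.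
by split => //; exact: stopping_time_cst0.
Qed.

Lemma Ex_mean_mix a b p va vb : X a -> X b -> a != b -> 0 <= p <= 1 ->
  p * a + (1 - p) * b = mu -> Ex_mean a va -> Ex_mean b vb ->
  (p%:E * va + (1 - p)%:E * vb <= 1)%E.
Proof.
move=> Xa Xb ab /andP[p0 p1] pmu [ta [Qa [sta HQa ->]]] [tb [Qb [stb HQb ->]]].
have ba : (b == a) = false by apply/negbTE; rewrite eq_sym.
have := hE.2.2 _ _ (barH_glue_prob (p := Itv01 p0 p1) Xa Xb ab pmu HQa HQb)
  (stopping_time_glue_time a sta stb).
rewrite ge0_integral_glue_prob /=; first last.
- by move=> w Xw; rewrite lee_fin; exact: hE.2.1.
- exact: measurable_stopped mX (stopping_time_glue_time a sta stb) hE.1.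
- exact: measurable_Xinf mX.
rewrite !preimage_scons_Xinf //.
by congr (_ * _ + _ * _ <= _)%E; apply: eq_integral => w _;
  rewrite /glue_time /= ?eqxx ?ba.
Qed.

End eprocess_means.

Theorem lemma5 (R : realType) (X : set R) (mu : R)
  (E : nat -> (nat -> R) -> R) :
  measurable X -> X `<=` `[0, 1] -> X 0 -> X 1 -> 0 < mu < 1 ->
  eprocess X mu E ->
  exists2 lam1 : R, (mu - 1)^-1 <= lam1 <= mu^-1 &
    forall (tau : (nat -> R) -> nat) (Q : probability (Seq R) R) (x : R),
      is_stopping_time X tau -> barH X mu Q -> X x ->
      (\int[Q]_(w in Xinf X) (E (tau w).+1 (scons x w))%:E
         <= (1 + lam1 * (x - mu))%:E)%E.
Proof.
move=> mX _ X0 X1 mu01 hE.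
have [lam lam_range maj] := exists_affine_majorant_ereal X0 X1 mu01
  (Ex_mean_ge0 hE) (@Ex_mean_total _ X mu E) (Ex_mean_mix hE mX).
exists lam => // tau Q x stau HQ Xx.
by apply: maj => //; exists tau, Q.
Qed.
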